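(* Let $\mathbf{A}\in\mathbb{C}^{N\times N}$ be a nonzero matrix (the weighted adjacency matrix of a graph), and let $\lambda_{\max}$ denote an eigenvalue of $\mathbf{A}$ of largest magnitude, i.e. $|\lambda_{\max}|\ge|\lambda|$ for every eigenvalue $\lambda$ of $\mathbf{A}$. Let $\lambda_m,\lambda_n\in\mathbb{R}$ be two distinct real eigenvalues of $\mathbf{A}$ with corresponding eigenvectors $\mathbf{v}_m,\mathbf{v}_n$, normalized so that $\|\mathbf{v}_m\|_1=\|\mathbf{v}_n\|_1=1$. If $\lambda_m<\lambda_n$, then $\mathrm{TV}_G(\mathbf{v}_m)>\mathrm{TV}_G(\mathbf{v}_n)$.
   Context: For a graph signal $\mathbf{s}\in\mathbb{C}^N$, the total variation on the graph is $\mathrm{TV}_G(\mathbf{s})=\|\mathbf{s}-\mathbf{A}^{\mathrm{norm}}\mathbf{s}\|_1$, where $\mathbf{A}^{\mathrm{norm}}=\frac{1}{|\lambda_{\max}|}\mathbf{A}$ is the normalized adjacency matrix. *)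

(* The field of complex numbers is abstracted as an
   arbitrary numClosedFieldType C (e.g. algC, or complex R). *)
From HB Require Import structures.
From mathcomp Require Import all_boot all_order all_algebra.
Set Implicit Arguments. Unset Strict Implicit. Unset Printing Implicit Defensive.
Import Order.TTheory GRing.Theory Num.Theory.
Local Open Scope ring_scope.

Definition l1norm (C : numClosedFieldType) (N : nat) (v : 'cV[C]_N) : C :=
  \sum_(i < N) `|v i 0|.

Definition Anorm (C : numClosedFieldType) (N : nat) (A : 'M[C]_N) (lmax : C)
  : 'M[C]_N := (`|lmax|)^-1 *: A.

Definition TV (C : numClosedFieldType) (N : nat) (A : 'M[C]_N) (lmax : C)
  (s : 'cV[C]_N) : C := l1norm (s - Anorm A lmax *m s).

From mathcomp Require Import all_boot all_order all_algebra.
Import Order.TTheory GRing.Theory Num.Theory.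
Local Open Scope ring_scope.

(* On an eigenvector of eigenvalue l, TV_G is the l1 norm scaled by |1 - l/|lmax||.
   For real l with |l| <= |lmax| this factor is 1 - l/|lmax|, strictly
   decreasing in l. *)

Lemma eigenvalue_tr (F : fieldType) (n : nat) (A : 'M[F]_n) (a : F) :
  eigenvalue A^T a = eigenvalue A a.
Proof.
rewrite /eigenvalue /eigenspace !kermx_eq0 /row_free.
have -> : A^T - a%:M = (A - a%:M)^T by rewrite linearB /= tr_scalar_mx.
by rewrite mxrank_tr.
Qed.

Lemma eigenvalue_col {F : fieldType} {n : nat} {A : 'M[F]_n} {a : F} {v : 'cV_n} :
  A *m v = a *: v -> v != 0 -> eigenvalue A a.
Proof.
move=> Av v_neq0; rewrite -eigenvalue_tr; apply/eigenvalueP; exists v^T.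
  by rewrite -trmx_mul Av linearZ.
by rewrite trmx_eq0.
Qed.

Section TotalVariation.
Context {C : numClosedFieldType} {N : nat}.
Implicit Types (A : 'M[C]_N) (v : 'cV[C]_N).

Lemma l1norm_neq0 v : l1norm v != 0 -> v != 0.
Proof.
apply: contraNneq => ->; rewrite /l1norm big1 // => i _.
by rewrite mxE normr0.
Qed.

Lemma TV_eigenvector {A} (lmax : C) {l : C} {v} :
  A *m v = l *: v -> TV A lmax v = `|1 - l / `|lmax| | * l1norm v.
Proof.
move=> Av; rewrite /TV /Anorm -scalemxAl Av scalerA -{1}(scale1r v) -scalerBl.
rewrite /l1norm mulr_sumr; apply: eq_bigr => i _.
by rewrite mxE normrM [l / _]mulrC.
Qed.

End TotalVariation.

Lemma norm_sub_ratio_real (R : numFieldType) (M l : R) :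
  0 < M -> l \is Num.real -> `|l| <= M -> `|1 - l / M| = 1 - l / M.
Proof.
move=> M_gt0 l_real l_le; apply: ger0_norm.
rewrite subr_ge0 ler_pdivrMr // mul1r.
exact: le_trans (real_ler_norm l_real) l_le.
Qed.

Theorem theorem1 (C : numClosedFieldType) (N : nat) (A : 'M[C]_N) (lmax : C)
  (lm ln : C) (vm vn : 'cV[C]_N) :
  A != 0 ->
  eigenvalue A lmax ->
  (forall l : C, eigenvalue A l -> `|l| <= `|lmax|) ->
  lm \is Num.real -> ln \is Num.real ->
  A *m vm = lm *: vm -> A *m vn = ln *: vn ->
  l1norm vm = 1 -> l1norm vn = 1 ->
  lm < ln ->
  TV A lmax vn < TV A lmax vm.
Proof.
move=> _ _ lmax_max lm_real ln_real Avm Avn vm_1 vn_1 lm_lt_ln.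
have vm_neq0 : vm != 0 by rewrite l1norm_neq0 // vm_1 oner_neq0.
have vn_neq0 : vn != 0 by rewrite l1norm_neq0 // vn_1 oner_neq0.
have lm_le := lmax_max _ (eigenvalue_col Avm vm_neq0).
have ln_le := lmax_max _ (eigenvalue_col Avn vn_neq0).
have lmax_gt0 : 0 < `|lmax|.
  rewrite lt0r normr_ge0 andbT; apply: contraTneq lm_lt_ln => lmax0.
  move: lm_le ln_le; rewrite lmax0 !normr_le0 => /eqP -> /eqP ->.
  by rewrite ltxx.
rewrite (TV_eigenvector lmax Avm) (TV_eigenvector lmax Avn) vm_1 vn_1 !mulr1.
rewrite !norm_sub_ratio_real //.
by rewrite ltrD2l ltrN2 ltr_pM2r ?invr_gt0.
Qed.
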